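(* Let $M$ be a Hausdorff space, $C_b(M)$ the $C^\ast$-algebra of bounded continuous functions $M\to\mathbb{C}$, and $C^{pt}(\mathcal{Q}(\mathcal{T}(M)))$ the $C^\ast$-subalgebra of $C(\mathcal{Q}(\mathcal{T}(M)))$ consisting of all continuous $\psi:\mathcal{Q}(\mathcal{T}(M))\to\mathbb{C}$ that are constant on each fibre of $pt:\mathcal{Q}^{pt}(\mathcal{T}(M))\to M$. Then the map \[ f_\ast:C_b(M)\to C^{pt}(\mathcal{Q}(\mathcal{T}(M))),\qquad \varphi\mapsto f_{E^{\varphi}}:=f_{E^{\mathrm{Re}\,\varphi}}+i\,f_{E^{\mathrm{Im}\,\varphi}}, \] is a $\ast$-isomorphism of $C^\ast$-algebras.
   Context: $\mathcal{T}(M)$ is the lattice of open subsets of $M$. A quasipoint of $\mathcal{T}(M)$ is a maximal dual ideal (maximal nonempty family of open sets not containing $\emptyset$, upward closed and closed under finite intersections); $\mathcal{Q}(\mathcal{T}(M))$ is the set of quasipoints with topology having base $\{\mathfrak{B}\mid U\in\mathfrak{B}\}$, $U\in\mathcal{T}(M)$ (a compact space). $\mathfrak{B}$ is over $x\in M$ if $x\in\bigcap_{U\in\mathfrak{B}}\overline{U}$ (at most one such $x$ since $M$ is Hausdorff); $\mathcal{Q}^{pt}(\mathcal{T}(M))$ is the set of quasipoints over some point, and $pt(\mathfrak{B})=x$ if $\mathfrak{B}$ is over $x$. For a bounded continuous $\psi:M\to\mathbb{R}$, $E^\psi_\lambda:=\mathrm{int}\,\psi^{-1}(]-\infty,\lambda])$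 and $f_{E^\psi}(\mathfrak{B}):=\inf\{\lambda\in\mathbb{R}\mid E^\psi_\lambda\in\mathfrak{B}\}$. $E^\varphi$ denotes the complex spectral family $E^\varphi_{\lambda,\mu}=E^{\mathrm{Re}\,\varphi}_\lambda\cap E^{\mathrm{Im}\,\varphi}_\mu$. *)

From HB Require Import structures.
From mathcomp Require Import all_boot all_order all_algebra.
From mathcomp Require Import all_classical all_reals all_analysis.
From mathcomp Require Import complex.
Set Implicit Arguments. Unset Strict Implicit. Unset Printing Implicit Defensive.
Import Order.TTheory GRing.Theory Num.Theory.
Import numFieldTopology.Exports numFieldNormedType.Exports.
Local Open Scope classical_set_scope.
Local Open Scope ring_scope.

Section QP.
Variable M : topologicalType.

Definition dual_ideal (B : set (set M)) : Prop :=
  [/\ (forall U, B U -> open U),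
      B !=set0,
      ~ B set0,
      (forall U V, B U -> open V -> U `<=` V -> B V) &
      (forall U V, B U -> B V -> B (U `&` V))].

Definition is_quasipoint (B : set (set M)) : Prop :=
  dual_ideal B /\ (forall B', dual_ideal B' -> B `<=` B' -> B' = B).

Definition quasipoint := {B : set (set M) | is_quasipoint B}.

Definition qfam (B : quasipoint) : set (set M) := proj1_sig B.

Definition over (B : quasipoint) (x : M) : Prop :=
  forall U, qfam B U -> closure U x.

(* Continuity of psi : Q(T(M)) -> C w.r.t. the topology with base
   {B | U \in B}, U open: written out in neighbourhood form. *)
Definition qcontinuous (R : realType) (psi : quasipoint -> R[i]) : Prop :=
  forall (B : quasipoint) (e : R), 0 < e ->
    exists2 U, qfam B U &
      forall B' : quasipoint, qfam B' U -> `|psi B' - psi B| < e%:C%C.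

(* constant on each fibre of pt : Q^pt(T(M)) -> M *)
Definition pt_constant (T : Type) (psi : quasipoint -> T) : Prop :=
  forall (B1 B2 : quasipoint) (x : M), over B1 x -> over B2 x -> psi B1 = psi B2.

Definition spec_fam (R : realType) (psi : M -> R) (l : R) : set M :=
  interior [set x | psi x <= l].

Definition fE (R : realType) (psi : M -> R) (B : quasipoint) : R :=
  inf [set l : R | qfam B (spec_fam psi l)].

Definition fstar (R : realType) (phi : M -> R[i]) (B : quasipoint) : R[i] :=
  Complex (fE (fun x => complex.Re (phi x)) B) (fE (fun x => complex.Im (phi x)) B).

Definition Cb (R : realType) (phi : M -> R[i]) : Prop :=
  continuous (phi : M -> (R[i] : numClosedFieldType)) /\ exists r : R, forall x, `|phi x| <= r%:C%C.

Definition Cpt (R : realType) (psi : quasipoint -> R[i]) : Prop :=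
  qcontinuous psi /\ pt_constant psi.

End QP.

From Pilot Require Import Defs.
From HB Require Import structures.
From mathcomp Require Import all_boot all_order all_algebra.
From mathcomp Require Import all_classical all_reals all_analysis.
From mathcomp Require Import complex.
From mathcomp Require Import lra.
Import Order.TTheory GRing.Theory Num.Theory.
Import numFieldTopology.Exports numFieldNormedType.Exports.
Set Implicit Arguments. Unset Strict Implicit. Unset Printing Implicit Defensive.
Local Open Scope classical_set_scope.
Local Open Scope ring_scope.

(* If B lies over x then f_{E^psi}(B) = psi x for bounded continuous psi: for
   lambda > psi x the set E^psi_lambda is a neighbourhood of x, hence belongs to B,
   while for lambda < psi x it misses a neighbourhood of x, which B cannot allow.  Quasipoints over points are dense in
   Q(T(M)), since every nonempty open set lies in one over each of its points, so two
   continuous functions on Q(T(M)) that agree over points are equal; this yields the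
   algebraic identities and injectivity.  Conversely psi in C^pt descends to
   phi x := psi B for any B over x.  Boundedness and continuity of phi follow from
   the compactness of Q(T(M)): a proper filter of quasipoints clusters at any maximal
   dual ideal containing the open sets eventually in its members. *)

Section ComplexParts.
Variable R : realType.
Local Notation C := (R[i] : numClosedFieldType).
Implicit Types z w : C.

Lemma normc_ge_Im z : (`|complex.Im z|)%:C%C <= `|z|.
Proof.
by case: z => a b; rewrite normc_def lecR /= -sqrtr_sqr ler_wsqrtr // lerDr sqr_ge0.
Qed.

Lemma normc_Re z : (complex.Re `|z|)%:C%C = `|z|.
Proof. by case: z. Qed.

Lemma complex_gt0P (e : C) : 0 < e -> exists2 r : R, 0 < r & e = r%:C%C.
Proof. by case: e => a b; rewrite ltcE /= => /andP[/eqP -> a0]; exists a. Qed.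

Lemma normc_le_ReIm z : `|z| <= (`|complex.Re z| + `|complex.Im z|)%:C%C.
Proof.
case: z => a b; rewrite normc_def lecR /=.
have [a0 b0] := (normr_ge0 a, normr_ge0 b).
apply: le_trans (ler_wsqrtr (_ : _ <= (`|a| + `|b|) ^+ 2)) _.
  by rewrite -(real_normK (num_real a)) -(real_normK (num_real b)); nra.
by rewrite sqrtr_sqr ger0_norm ?addr_ge0.
Qed.

Section Limits.
Variables (T : Type) (F : set_system T).
Context {FF : Filter F}.
Variables (phi : T -> C) (l : C).
Hypothesis phi_l : phi @ F --> l.

Lemma cvg_nonexpansive (f : C -> R) :
  (forall z w, (`|f z - f w|)%:C%C <= `|z - w|) -> (fun t => f (phi t)) @ F --> f l.
Proof.
move=> f_le; apply/cvgrPdist_lt => e e0.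
have e0C : (0 : C) < e%:C%C by rewrite ltcR.
apply: filterS ((cvgrPdist_lt _ _).1 phi_l _ e0C) => t.
by rewrite -ltcR; apply: le_lt_trans (f_le _ _).
Qed.

Lemma cvg_Re : (fun t => complex.Re (phi t)) @ F --> complex.Re l.
Proof. by apply: cvg_nonexpansive => -[a b] [c d]; apply: (normc_ge_Re (_ +i* _)%C). Qed.

Lemma cvg_Im : (fun t => complex.Im (phi t)) @ F --> complex.Im l.
Proof. by apply: cvg_nonexpansive => -[a b] [c d]; apply: (normc_ge_Im (_ +i* _)%C). Qed.

Lemma cvg_conjC : (fun t => (phi t)^*) @ F --> l^*.
Proof.
apply/cvgrPdist_lt => e e0; apply: filterS ((cvgrPdist_lt _ _).1 phi_l _ e0) => t.
by rewrite -rmorphB norm_conjC.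
Qed.

End Limits.

End ComplexParts.

Section Quasipoints.
Variable M : topologicalType.
Implicit Types (B : quasipoint M) (G : set (set M)) (U V : set M) (x : M).

Lemma qfam_dual B : dual_ideal (qfam B).
Proof. by case: B => ? []. Qed.

Lemma qfam_open B U : qfam B U -> open U.
Proof. by case: (qfam_dual B) => + _ _ _ _; apply. Qed.

Lemma qfam_neq0 B U : qfam B U -> U !=set0.
Proof. by case: (qfam_dual B) => _ _ B0 _ _ BU; apply/set0P/eqP => U0; rewrite U0 in BU. Qed.

Lemma qfamS B U V : qfam B U -> open V -> U `<=` V -> qfam B V.
Proof. by case: (qfam_dual B) => _ _ _ + _; apply. Qed.

Lemma qfamI B U V : qfam B U -> qfam B V -> qfam B (U `&` V).
Proof. by case: (qfam_dual B) => _ _ _ _; apply. Qed.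

Lemma qfamT B : qfam B setT.
Proof. by case: (qfam_dual B) => _ [U BU] _ _ _; apply: qfamS BU openT _. Qed.

Lemma meets_qfam B U : open U -> (forall V, qfam B V -> V `&` U !=set0) -> qfam B U.
Proof.
move=> oU BU.
pose B' V := open V /\ exists2 W, qfam B W & W `&` U `<=` V.
have dB' : dual_ideal B'.
  split=> [V []//||[_ [W BW WU]]|V V' [_ [W BW WV]] oV' VV'|
           V V' [oV [W BW WV]] [oV' [W' BW' WV']]].
  - by exists setT; split; [exact: openT|exists setT; [exact: qfamT|]].
  - by have [x Wx] := BU W BW; apply: WU Wx.
  - by split=> //; exists W => // x /WV /VV'.
  - split; first exact: openI.
    exists (W `&` W'); first exact: qfamI.
    by move=> x [[Wx W'x] Ux]; split; [apply: WV|apply: WV'].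
have BB' : qfam B `<=` B' by move=> V BV; split; [exact: qfam_open BV|exists V => // x []].
suff : B' U by rewrite ((proj2 (svalP B)) B' dB' BB').
by split=> //; exists setT; [exact: qfamT|move=> x []].
Qed.

Lemma qfam_interiorC B U : open U -> qfam B (interior (~` U)) <-> ~ qfam B U.
Proof.
move=> oU; split=> [BUc BU|NBU].
  by have [x [Ux /interior_subset Ucx]] := qfam_neq0 (qfamI BU BUc).
have [V BV VU0] : exists2 V, qfam B V & ~ (V `&` U !=set0).
  apply: contra_notP NBU => NV; apply: meets_qfam => // V BV.
  by apply: contra_notP NV => NVU; exists V.
apply: qfamS (BV) (@open_interior _ _) _.
rewrite -open_subsetE => [x Vx Ux|]; first by apply: VU0; exists x.
exact: qfam_open BV.
Qed.

Lemma dual_ideal_bigcup (I : Type) (C : set I) (F : I -> set (set M)) :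
  C !=set0 -> (forall i, C i -> dual_ideal (F i)) ->
  (forall i j, C i -> C j -> F i `<=` F j \/ F j `<=` F i) ->
  dual_ideal (\bigcup_(i in C) F i).
Proof.
move=> [i0 Ci0] dF Ftot; have [_ [U0 FU0] _ _ _] := dF i0 Ci0.
split=> [U [i Ci FiU]|||U V [i Ci FiU] oV UV|U V [i Ci FiU] [j Cj FjV]].
- by case: (dF i Ci) => + _ _ _ _; apply.
- by exists U0, i0.
- by move=> [i Ci]; case: (dF i Ci).
- by exists i => //; case: (dF i Ci) => _ _ _ up _; exact: up FiU oV UV.
- have [FiFj|FjFi] := Ftot i j Ci Cj.
  + by exists j => //; case: (dF j Cj) => _ _ _ _ meet; apply: meet (FiFj _ FiU) FjV.
  + by exists i => //; case: (dF i Ci) => _ _ _ _ meet; apply: meet FiU (FjFi _ FjV).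
Qed.

Lemma dual_ideal_quasipoint G : dual_ideal G -> exists B, G `<=` qfam B.
Proof.
move=> dG; pose T := {F : set (set M) | dual_ideal F /\ G `<=` F}.
have [[F [dF GF]] Fmax] : exists t : T, forall s : T, `[< sval t `<=` sval s >] -> s = t.
  apply: Zorn => [t|r s t /asboolP rs /asboolP st|s t /asboolP st /asboolP ts|C Ctot].
  - exact/asboolP.
  - by apply/asboolP; apply: subset_trans st.
  - by case: s t st ts => [s ?] [t ?] /= st ts; apply/eq_exist/seteqP.
  have [[c Cc]|C0] := pselect (C !=set0); last first.
    exists (exist _ G (conj dG (@subset_refl _ G))) => s Cs.
    by exfalso; apply: C0; exists s.
  have dC : dual_ideal (\bigcup_(s in C) sval s).
    apply: dual_ideal_bigcup => [|s Cs|s t Cs Ct]; first by exists c.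
      by case: (svalP s).
    by case: (Ctot s t Cs Ct) => /asboolP; [left|right].
  have GC : G `<=` \bigcup_(s in C) sval s.
    by move=> U GU; exists c => //; case: (svalP c) => _; apply.
  exists (exist _ (\bigcup_(s in C) sval s) (conj dC GC)) => s Cs.
  by apply/asboolP => U FU; exists s.
have Fqp : is_quasipoint F.
  split=> // F' dF' FF'.
  have GF' : G `<=` F' by apply: subset_trans FF'.
  exact: (congr1 sval (Fmax (exist _ F' (conj dF' GF')) (asboolT FF'))).
by exists (exist _ F Fqp).
Qed.

Lemma over_qfam B x U : Defs.over B x -> open U -> U x -> qfam B U.
Proof.
move=> Bx oU Ux; apply: meets_qfam => // V BV.
by apply: (Bx V BV U); apply: open_nbhs_nbhs.
Qed.

Lemma exists_over x : exists B, Defs.over B x.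
Proof.
have dG : dual_ideal [set U | open U /\ U x].
  split=> [U []//||[]//|U V [_ Ux] oV UV|U V [oU Ux] [oV Vx]].
  - by exists setT; split; [exact: openT|].
  - by split=> //; apply: UV.
  - by split; [exact: openI|].
have [B GB] := dual_ideal_quasipoint dG.
exists B => V BV W Wx.
have BW : qfam B (interior W) by apply: GB; split; [exact: open_interior|exact: Wx].
by have [y [Vy /interior_subset Wy]] := qfam_neq0 (qfamI BV BW); exists y.
Qed.

Lemma exists_over_qfam x U : open U -> U x -> exists2 B, Defs.over B x & qfam B U.
Proof.
by move=> oU Ux; have [B Bx] := exists_over x; exists B; last exact: over_qfam Bx oU Ux.
Qed.

Definition qpoint_of x : quasipoint M := projT1 (cid (exists_over x)).

Lemma qpoint_of_over x : Defs.over (qpoint_of x) x.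
Proof. exact: projT2 (cid (exists_over x)). Qed.

Definition qnbhs B : set_system (quasipoint M) :=
  filter_from (qfam B) (fun U => [set B' | qfam B' U]).

Global Instance qnbhs_proper B : ProperFilter (qnbhs B).
Proof.
apply: filter_from_proper => [|U BU].
  apply: filter_from_filter => [|U V BU BV]; first by exists setT; exact: qfamT.
  exists (U `&` V); first exact: qfamI.
  move=> B' B'UV; split.
    by apply: qfamS B'UV (qfam_open BU) _; apply: subIsetl.
  by apply: qfamS B'UV (qfam_open BV) _; apply: subIsetr.
have [x Ux] := qfam_neq0 BU.
by have [B' _ B'U] := exists_over_qfam (qfam_open BU) Ux; exists B'.
Qed.

Lemma quasipoint_cluster (F : set_system (quasipoint M)) :
  ProperFilter F -> exists B, F `#` qnbhs B.
Proof.
move=> PF; pose G U := open U /\ F [set B' | qfam B' U].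
have dG : dual_ideal G.
  split=> [U []//||[_ F0]|U V [_ FU] oV UV|U V [oU FU] [oV FV]].
  - by exists setT; split; [exact: openT|apply: filterS filterT => B' _; exact: qfamT].
  - by apply: (filter_not_empty F); apply: filterS F0 => B' /qfam_neq0 [].
  - by split=> //; apply: filterS FU => B' B'U; apply: qfamS B'U oV UV.
  - split; first exact: openI.
    by apply: filterS (filterI FU FV) => B' [B'U B'V]; apply: qfamI.
have [B GB] := dual_ideal_quasipoint dG.
exists B => A V FA [U BU UV]; apply: contrapT => AV0.
have oU := qfam_open BU.
suff : G (interior (~` U)) by move=> /GB /(qfam_interiorC _ oU).
split; first exact: open_interior.
apply: filterS FA => B' AB'; apply/(qfam_interiorC _ oU) => B'U.
by apply: AV0; exists B'; split; last exact: UV.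
Qed.

End Quasipoints.

Section QuasipointContinuity.
Variables (R : realType) (M : topologicalType).
Local Notation C := (R[i] : numClosedFieldType).
Implicit Types (B : quasipoint M) (f g : quasipoint M -> C).

Lemma qcontinuousP f : qcontinuous f <-> forall B, f @ qnbhs B --> f B.
Proof.
split=> [fc B|fc B e e0].
  apply/cvgrPdist_lt => _ /complex_gt0P [e e0 ->].
  by have [U BU Uf] := fc B e e0; exists U => // B' /Uf; rewrite distrC.
have e0C : (0 : C) < e%:C%C by rewrite ltcR.
have [U BU Uf] := (cvgrPdist_lt _ _).1 (fc B) _ e0C.
by exists U => // B' /Uf; rewrite distrC.
Qed.

Lemma qcontinuousD f g : qcontinuous f -> qcontinuous g -> qcontinuous (fun B => f B + g B).
Proof. by move=> /qcontinuousP fc /qcontinuousP gc; apply/qcontinuousP => B; apply: cvgD. Qed.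

Lemma qcontinuousM f g : qcontinuous f -> qcontinuous g -> qcontinuous (fun B => f B * g B).
Proof. by move=> /qcontinuousP fc /qcontinuousP gc; apply/qcontinuousP => B; apply: cvgM. Qed.

Lemma qcontinuous_conj f : qcontinuous f -> qcontinuous (fun B => (f B)^*).
Proof. by move=> /qcontinuousP fc; apply/qcontinuousP => B; apply: cvg_conjC. Qed.

Lemma qcontinuous_eq f g : qcontinuous f -> qcontinuous g ->
  (forall B x, Defs.over B x -> f B = g B) -> f = g.
Proof.
move=> /qcontinuousP fc /qcontinuousP gc fg; apply/funext => B; apply/eqP.
rewrite -subr_eq0; apply: contraT => fgB; rewrite -normr_gt0 in fgB.
have [U BU Ufg] := (cvgrPdist_lt _ _).1 (cvgB (fc B) (gc B)) _ fgB.
have [x Ux] := qfam_neq0 BU.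
have [B' B'x B'U] := exists_over_qfam (qfam_open BU) Ux.
by have := Ufg B' B'U; rewrite !fctE (fg B' x B'x) subrr subr0 ltxx.
Qed.

Lemma qcontinuous_bounded f : qcontinuous f -> exists r : R, forall B, `|f B| <= r%:C%C.
Proof.
move=> /qcontinuousP fc; apply: contrapT => unbounded.
have big r : exists B, ~ `|f B| <= r%:C%C.
  by apply/existsNP => small; apply: unbounded; exists r.
pose F := filter_from setT (fun r : R => [set B | ~ `|f B| <= r%:C%C]).
have PF : ProperFilter F.
  apply: filter_from_proper => [|r _]; last by have [B] := big r; exists B.
  apply: filter_fromT_filter => [|r s]; first by exists 0.
  exists (Num.max r s) => B Bbig; split=> Ble; apply: Bbig; apply: le_trans Ble _;
    by rewrite lecR le_max lexx ?orbT.
have [B FB] := quasipoint_cluster PF.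
have near_B : \forall B' \near qnbhs B, `|f B - f B'| < 1.
  exact: cvgr_dist_lt (fc B) _ ltr01.
set r := complex.Re `|f B| + 1.
have far_B : F [set B' | ~ `|f B'| <= r%:C%C] by exists r.
have [B' [B'big B'near]] := FB _ _ far_B near_B.
apply: B'big; have -> : r%:C%C = `|f B| + 1.
  by rewrite rmorphD rmorph1; congr (_ + _); apply: normc_Re.
rewrite -lerBlDl.
by apply: le_trans (lerB_dist _ _) _; rewrite distrC ltW.
Qed.

End QuasipointContinuity.

Section SpectralFamily.
Variables (R : realType) (M : topologicalType) (psi : M -> R).
Hypothesis psi_bounded : exists r, forall x, `|psi x| <= r.
Implicit Types (B : quasipoint M) (l m : R).

Lemma spec_famS l m : l <= m -> spec_fam psi l `<=` spec_fam psi m.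
Proof. by move=> lm; apply: interiorS => x /= /le_trans; apply. Qed.

Lemma qfam_spec_famS B l m : qfam B (spec_fam psi l) -> l <= m -> qfam B (spec_fam psi m).
Proof. by move=> Bl lm; apply: qfamS Bl (@open_interior _ _) (spec_famS lm). Qed.

Lemma has_inf_spec_fam B : has_inf [set l | qfam B (spec_fam psi l)].
Proof.
have [r psi_r] := psi_bounded; split.
  exists r; apply: qfamS (qfamT B) (@open_interior _ _) _.
  rewrite -open_subsetE => [x _|]; last exact: openT.
  exact: le_trans (ler_norm _) (psi_r x).
exists (- r) => l /qfam_neq0 [x /interior_subset /= psi_l].
by apply: le_trans psi_l; move: (psi_r x); rewrite ler_norml => /andP[].
Qed.

Lemma fE_le B l : qfam B (spec_fam psi l) -> fE psi B <= l.
Proof. by case: (has_inf_spec_fam B) => _ /ge_inf; apply. Qed.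

Lemma fE_ge B m : (forall l, qfam B (spec_fam psi l) -> m <= l) -> m <= fE psi B.
Proof. by case: (has_inf_spec_fam B) => /lb_le_inf + _; apply. Qed.

Lemma fE_lt_qfam B l : fE psi B < l -> qfam B (spec_fam psi l).
Proof.
rewrite -subr_gt0 => /inf_adherent /(_ (has_inf_spec_fam B)) [m Bm].
by rewrite -/(fE psi B) subrKC => /ltW; apply: qfam_spec_famS.
Qed.

Lemma fE_qcontinuous B e : 0 < e ->
  exists2 U, qfam B U & forall B', qfam B' U -> `|fE psi B' - fE psi B| < e.
Proof.
move=> e0; set a := fE psi B; set Lo := spec_fam psi (a - e / 2).
have oLo : open Lo := @open_interior _ _.
have BUp : qfam B (spec_fam psi (a + e / 2)) by apply: fE_lt_qfam; rewrite ltrDl divr_gt0.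
have BLo : ~ qfam B Lo by move=> /fE_le; rewrite -/a; lra.
exists (spec_fam psi (a + e / 2) `&` interior (~` Lo)).
  by apply: qfamI BUp _; apply/qfam_interiorC.
move=> B' B'U.
have le_up : fE psi B' <= a + e / 2.
  by apply: fE_le; apply: qfamS B'U (@open_interior _ _) (@subIsetl _ _ _).
have ge_lo : a - e / 2 <= fE psi B'.
  apply: fE_ge => l B'l; rewrite leNgt; apply/negP => la.
  have /(qfam_interiorC _ oLo) : qfam B' (interior (~` Lo)).
    by apply: qfamS B'U (@open_interior _ _) (@subIsetr _ _ _).
  by apply; apply: qfam_spec_famS B'l (ltW la).
rewrite ltr_distlC; apply/andP; split; lra.
Qed.

Lemma fE_over B x : {for x, continuous psi} -> Defs.over B x -> fE psi B = psi x.
Proof.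
move=> psic Bx; apply/eqP; rewrite eq_le; apply/andP; split.
  apply/ler_addgt0Pr => e e0; apply: fE_le.
  apply: over_qfam Bx (@open_interior _ _) _.
  by apply: (cvgr_le _ psic); rewrite ltrDl.
apply: fE_ge => l Bl; rewrite leNgt; apply/negP => lpsi.
have [y [/interior_subset /= yl ly]] := Bx _ Bl _ (cvgr_gt _ psic _ lpsi).
by rewrite ltNge yl in ly.
Qed.

End SpectralFamily.

Section Fstar.
Variables (R : realType) (M : topologicalType).
Local Notation C := (R[i] : numClosedFieldType).
Implicit Types (phi chi : M -> C) (B : quasipoint M).

Lemma Cb_Re_bounded phi : Cb phi -> exists r, forall x, `|complex.Re (phi x)| <= r.
Proof. by move=> [_ [r phi_r]]; exists r => x; rewrite -lecR (le_trans (normc_ge_Re _)). Qed.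

Lemma Cb_Im_bounded phi : Cb phi -> exists r, forall x, `|complex.Im (phi x)| <= r.
Proof. by move=> [_ [r phi_r]]; exists r => x; rewrite -lecR (le_trans (normc_ge_Im _)). Qed.

Lemma fstar_over phi B x : Cb phi -> Defs.over B x -> fstar phi B = phi x.
Proof.
move=> /[dup] phiCb [phic _] Bx; rewrite /fstar.
rewrite (fE_over (Cb_Re_bounded phiCb) (cvg_Re (phic x)) Bx).
by rewrite (fE_over (Cb_Im_bounded phiCb) (cvg_Im (phic x)) Bx); case: (phi x).
Qed.

Lemma fstar_qcontinuous phi : Cb phi -> qcontinuous (fstar phi).
Proof.
move=> phiCb B e e0; have e20 : 0 < e / 2 by rewrite divr_gt0.
have [U BU URe] := fE_qcontinuous (Cb_Re_bounded phiCb) B e20.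
have [V BV VIm] := fE_qcontinuous (Cb_Im_bounded phiCb) B e20.
exists (U `&` V) => [|B' B'UV]; first exact: qfamI.
have /URe ltRe : qfam B' U by apply: qfamS B'UV (qfam_open BU) (@subIsetl _ _ _).
have /VIm ltIm : qfam B' V by apply: qfamS B'UV (qfam_open BV) (@subIsetr _ _ _).
apply: le_lt_trans (normc_le_ReIm _) _; rewrite ltcR /=; lra.
Qed.

Lemma fstar_unique phi (g : quasipoint M -> C) : Cb phi -> qcontinuous g ->
  (forall B x, Defs.over B x -> g B = phi x) -> fstar phi = g.
Proof.
move=> phiCb gc gphi; apply: qcontinuous_eq (fstar_qcontinuous phiCb) gc _ => B x Bx.
by rewrite (fstar_over phiCb Bx) (gphi B x Bx).
Qed.

Lemma CbD phi chi : Cb phi -> Cb chi -> Cb (fun x => phi x + chi x).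
Proof.
move=> [phic [r phi_r]] [chic [s chi_s]]; split=> [x|]; first exact: cvgD (phic x) (chic x).
exists (r + s) => x; rewrite rmorphD /=.
by apply: le_trans (ler_normD _ _) (lerD (phi_r x) (chi_s x)).
Qed.

Lemma CbM phi chi : Cb phi -> Cb chi -> Cb (fun x => phi x * chi x).
Proof.
move=> [phic [r phi_r]] [chic [s chi_s]]; split=> [x|]; first exact: cvgM (phic x) (chic x).
by exists (r * s) => x; rewrite rmorphM /= normrM ler_pM.
Qed.

Lemma Cb_cst (c : C) : Cb (fun _ : M => c).
Proof.
split=> [x|]; first exact: cvg_cst.
by exists (Num.sqrt (complex.Re c ^+ 2 + complex.Im c ^+ 2)) => x; rewrite normc_def.
Qed.

Lemma Cb_conjC phi : Cb phi -> Cb (fun x => (phi x)^*).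
Proof.
move=> [phic [r phi_r]]; split=> [x|]; first exact: cvg_conjC (phic x).
by exists r => x; rewrite norm_conjC.
Qed.

Lemma fstarD phi chi : Cb phi -> Cb chi ->
  fstar (fun x => phi x + chi x) = (fun B => fstar phi B + fstar chi B).
Proof.
move=> phiCb chiCb; apply: fstar_unique (CbD phiCb chiCb) _ _.
  exact: qcontinuousD (fstar_qcontinuous phiCb) (fstar_qcontinuous chiCb).
by move=> B x Bx; rewrite (fstar_over phiCb Bx) (fstar_over chiCb Bx).
Qed.

Lemma fstarM phi chi : Cb phi -> Cb chi ->
  fstar (fun x => phi x * chi x) = (fun B => fstar phi B * fstar chi B).
Proof.
move=> phiCb chiCb; apply: fstar_unique (CbM phiCb chiCb) _ _.
  exact: qcontinuousM (fstar_qcontinuous phiCb) (fstar_qcontinuous chiCb).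
by move=> B x Bx; rewrite (fstar_over phiCb Bx) (fstar_over chiCb Bx).
Qed.

Lemma fstar_cst (c : C) : fstar (fun _ : M => c) = (fun=> c).
Proof.
apply: fstar_unique (Cb_cst c) _ (fun _ _ _ => erefl).
by move=> B e e0; exists setT => [|B' _]; [exact: qfamT|rewrite subrr normr0 ltcR].
Qed.

Lemma fstarZ (c : C) phi : Cb phi -> fstar (fun x => c * phi x) = (fun B => c * fstar phi B).
Proof. by move=> phiCb; rewrite (fstarM (Cb_cst c) phiCb) fstar_cst. Qed.

Lemma fstar_conjC phi : Cb phi -> fstar (fun x => (phi x)^*) = (fun B => (fstar phi B)^*).
Proof.
move=> phiCb; apply: fstar_unique (Cb_conjC phiCb) _ _.
  exact: qcontinuous_conj (fstar_qcontinuous phiCb).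
by move=> B x Bx; rewrite (fstar_over phiCb Bx).
Qed.

End Fstar.

Section Descent.
Variables (R : realType) (M : topologicalType) (psi : quasipoint M -> R[i]).
Hypotheses (psi_qcont : qcontinuous psi) (psi_pt : pt_constant psi).
Local Notation C := (R[i] : numClosedFieldType).

Definition descend (x : M) : C := psi (qpoint_of x).

Lemma descend_over B x : Defs.over B x -> psi B = descend x.
Proof. by move=> Bx; apply: psi_pt Bx (@qpoint_of_over _ x). Qed.

Lemma descend_continuous : continuous descend.
Proof.
move=> x; apply/cvgrPdist_lt => e e0; apply: contrapT => far.
pose far_in N := [set B | exists2 y, N y /\ ~ `|descend x - descend y| < e & Defs.over B y].
pose F := filter_from (nbhs x) far_in.
have PF : ProperFilter F.
  apply: filter_from_proper => [|N Nx].
    apply: filter_from_filter => [|N N' Nx N'x]; first by exists setT; exact: filterT.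
    exists (N `&` N') => [|B [y [[Ny N'y] ey] By]]; first exact: filterI.
    by split; exists y.
  have [y [Ny ey]] : exists y, N y /\ ~ `|descend x - descend y| < e.
    apply: contrapT => near_x; apply: far; apply: filterS Nx => y Ny.
    by apply: contrapT => ey; apply: near_x; exists y.
  by exists (qpoint_of y), y; last exact: qpoint_of_over.
have [B FB] := quasipoint_cluster PF.
have Bx : Defs.over B x.
  move=> V BV W Wx; have FW : F (far_in (interior W)).
    by exists (interior W) => //; exact: nbhs_interior.
  have BV' : qnbhs B [set B' | qfam B' V] by exists V.
  have [B' [[y [Wy _] B'y] B'V]] := FB _ _ FW BV'.
  exact: B'y V B'V W Wy.
have /qcontinuousP psi_cvg := psi_qcont.
have near_B : \forall B' \near qnbhs B, `|psi B - psi B'| < e.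
  exact: cvgr_dist_lt (psi_cvg B) _ e0.
have FT : F (far_in setT) by exists setT => //; exact: filterT.
have [B' [[y [_ ey] B'y] B'e]] := FB _ _ FT near_B.
by apply: ey; rewrite -(descend_over Bx) -(descend_over B'y).
Qed.

Lemma descend_Cb : Cb descend.
Proof.
split; first exact: descend_continuous.
by have [r psi_r] := qcontinuous_bounded psi_qcont; exists r => x; apply: psi_r.
Qed.

Lemma fstar_descend : fstar descend = psi.
Proof. exact: fstar_unique descend_Cb psi_qcont (fun B x Bx => descend_over Bx). Qed.

End Descent.

Theorem theorem2p45 (R : realType) (M : topologicalType) (HM : hausdorff_space M) :
  (* f_* maps C_b(M) into C^pt(Q(T(M))) *)
  (forall phi : M -> R[i], Cb phi -> Cpt (fstar phi)) /\
  (* f_* is a *-homomorphism *)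
  (forall phi chi : M -> R[i], Cb phi -> Cb chi ->
     fstar (fun x => phi x + chi x) = (fun B => fstar phi B + fstar chi B)) /\
  (forall phi chi : M -> R[i], Cb phi -> Cb chi ->
     fstar (fun x => phi x * chi x) = (fun B => fstar phi B * fstar chi B)) /\
  (forall (c : R[i]) (phi : M -> R[i]), Cb phi ->
     fstar (fun x => c * phi x) = (fun B => c * fstar phi B)) /\
  (forall phi : M -> R[i], Cb phi ->
     fstar (fun x => (phi x)^*) = (fun B => (fstar phi B)^*)) /\
  (* f_* is injective on C_b(M) *)
  (forall phi chi : M -> R[i], Cb phi -> Cb chi -> fstar phi = fstar chi -> phi = chi) /\
  (* f_* is onto C^pt(Q(T(M))) *)
  (forall psi : quasipoint M -> R[i], Cpt psi -> exists2 phi, Cb phi & fstar phi = psi).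
Proof.
split=> [phi phiCb|]; first split.
- exact: fstar_qcontinuous.
- by move=> B1 B2 x B1x B2x; rewrite (fstar_over phiCb B1x) (fstar_over phiCb B2x).
split; first exact: fstarD.
split; first exact: fstarM.
split; first exact: fstarZ.
split; first exact: fstar_conjC.
split=> [phi chi phiCb chiCb phi_chi|psi [psi_qcont psi_pt]].
  apply/funext => x; have [B Bx] := exists_over x.
  by rewrite -(fstar_over phiCb Bx) -(fstar_over chiCb Bx) phi_chi.
by exists (descend psi); [exact: descend_Cb|exact: fstar_descend].
Qed.
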